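(* Let $e_1,e_2,e_3$ be nonzero integers with $e_1+e_2+e_3=0$, $e_1,e_2$ odd and $2\,\|\,e_3$. Let $n$ be an odd positive square-free integer and $\Lambda=(d_1,d_2,d_3)$ with $d_1,d_2,d_3$ square-free divisors of $2e_1e_2e_3n$ and $d_1d_2d_3$ a square. If $D^{(n)}_\Lambda(\mathbb{Q}_2)\ne\emptyset$, then $d_3$ is odd.
   Context: $D^{(n)}_\Lambda\subset\mathbb{P}^3$ (coordinates $(t,u_1,u_2,u_3)$) is defined by $e_1nt^2+d_2u_2^2-d_3u_3^2=0$, $e_2nt^2+d_3u_3^2-d_1u_1^2=0$, $e_3nt^2+d_1u_1^2-d_2u_2^2=0$. $2\,\|\,m$ means $2\mid m$, $4\nmid m$. *)

From mathcomp Require Import all_boot all_order all_algebra.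
Set Implicit Arguments. Unset Strict Implicit. Unset Printing Implicit Defensive.
Import Order.TTheory GRing.Theory Num.Theory.
Local Open Scope ring_scope.

Definition sqfree_nat (m : nat) : Prop :=
  (0 < m)%N /\ forall p : nat, prime p -> ~~ (p * p %| m)%N.

Definition sqfree_int (d : int) : Prop := sqfree_nat `|d|%N.

(* 2-adic integers, as the inverse limit of Z/2^k Z: a sequence of integers
   a_k (a_k representing the residue mod 2^k) with a_{k+1} = a_k mod 2^k. *)
Definition is_Z2 (a : nat -> int) : Prop :=
  forall k : nat, (a k.+1 = a k %[mod (2 ^ k)%N%:Z])%Z.

Definition Z2_nonzero (a : nat -> int) : Prop :=
  exists k : nat, ~ (a k = 0 %[mod (2 ^ k)%N%:Z])%Z.

(* Every point of
   P^3(Q_2) has a representative in Z_2^4 (clear denominators), so a point is a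
   nonzero vector in Z_2^4 satisfying the three homogeneous equations; ring
   operations in Z_2 are componentwise modulo 2^k. *)
Definition D_has_Q2_point (e1 e2 e3 d1 d2 d3 n : int) : Prop :=
  exists t u1 u2 u3 : nat -> int,
    [/\ is_Z2 t, is_Z2 u1, is_Z2 u2 & is_Z2 u3] /\
    (Z2_nonzero t \/ Z2_nonzero u1 \/ Z2_nonzero u2 \/ Z2_nonzero u3) /\
    forall k : nat,
      [/\ (e1 * n * t k ^+ 2 + d2 * u2 k ^+ 2 - d3 * u3 k ^+ 2 = 0 %[mod (2 ^ k)%N%:Z])%Z,
          (e2 * n * t k ^+ 2 + d3 * u3 k ^+ 2 - d1 * u1 k ^+ 2 = 0 %[mod (2 ^ k)%N%:Z])%Z &
          (e3 * n * t k ^+ 2 + d1 * u1 k ^+ 2 - d2 * u2 k ^+ 2 = 0 %[mod (2 ^ k)%N%:Z])%Z].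

From mathcomp Require Import all_boot all_order all_algebra ring.
Import Order.TTheory GRing.Theory Num.Theory.
Local Open Scope ring_scope.

(* Suppose d3 is even.  As d1 d2 d3 is a square and the d_i are square-free,
   exactly one of d1, d2 is even, and the symmetry
   (e1, e2, e3, d1, d2, d3, u1, u2) |-> (-e2, -e1, -e3, d2, d1, d3, u2, u1)
   of the equations lets us assume it is d1.  Modulo 4, with e1 n odd, e3 n
   even, d2 odd and d1, d3 twice an odd number, the equations force u2, t, u3
   and u1 to be even in turn.  The equations being homogeneous of degree 2,
   halving a solution modulo 4^(k+1) gives a solution modulo 4^k, so every
   coordinate of a Z_2-point is divisible by every power of 2: the point is 0. *)

Lemma dvdz2_mul (a b : int) : (2 %| a * b)%Z = (2 %| a)%Z || (2 %| b)%Z.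
Proof. by rewrite !dvdzE abszM Euclid_dvdM. Qed.

Lemma dvdz2_sqr (a : int) : (2 %| a ^+ 2)%Z = (2 %| a)%Z.
Proof. by rewrite !dvdzE abszX Euclid_dvdX ?andbT. Qed.

Lemma dvdz2_odd_mul_sqr (c x : int) :
  ~~ (2 %| c)%Z -> (2 %| c * x ^+ 2)%Z = (2 %| x)%Z.
Proof. by move=> /negbTE c_odd; rewrite dvdz2_mul c_odd dvdz2_sqr. Qed.

Lemma dvdz4_mul_sqr (c : int) [x : int] : (2 %| x)%Z -> (4 %| c * x ^+ 2)%Z.
Proof. by move=> /(dvdz_exp2r 2); apply: dvdz_mull. Qed.

Lemma dvdz4_mul_sqr_double [b x : int] :
  (2 %| b)%Z -> ~~ (4 %| b)%Z -> (4 %| b * x ^+ 2)%Z -> (2 %| x)%Z.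
Proof.
move=> /dvdzP[b' ->]; rewrite mulrAC (_ : 4 = 2 * 2) // !dvdz_mul2r //.
by move=> /dvdz2_odd_mul_sqr->.
Qed.

Lemma logn_sqfree_int (p : nat) (d : int) :
  prime p -> sqfree_int d -> logn p `|d| = (p %| d)%Z.
Proof.
move=> p_pr [d_gt0 /(_ p p_pr)]; rewrite dvdzE mulnn.
rewrite (pfactor_dvdn 2 p_pr d_gt0) -[p in (p %| _)%N]expn1.
by rewrite (pfactor_dvdn 1 p_pr d_gt0); case: logn => [|[|]].
Qed.

Lemma sqfree_prod_sqr_dvd (p : nat) (d1 d2 d3 s : int) :
  prime p -> sqfree_int d1 -> sqfree_int d2 -> sqfree_int d3 ->
  d1 * d2 * d3 = s ^+ 2 -> (p %| d3)%Z -> (p %| d1)%Z != (p %| d2)%Z.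
Proof.
move=> p_pr sf1 sf2 sf3 /(congr1 (fun x => odd (logn p `|x|))).
rewrite /= abszX lognX oddM andFb !abszM.
have [d1_gt0 _] := sf1; have [d2_gt0 _] := sf2; have [d3_gt0 _] := sf3.
rewrite !lognM ?muln_gt0 ?d1_gt0 ?d2_gt0 // !logn_sqfree_int // !oddD !oddb.
by case: (p %| d1)%Z; case: (p %| d2)%Z; case: (p %| d3)%Z.
Qed.

Definition dvdz_all (M t u1 u2 u3 : int) : Prop :=
  [/\ (M %| t)%Z, (M %| u1)%Z, (M %| u2)%Z & (M %| u3)%Z].

Section DescentModTwoPowers.

Variables A1 A2 A3 d1 d2 d3 : int.

(* A_i plays the role of e_i n. *)
Definition D_sol_mod (M t u1 u2 u3 : int) : Prop :=
  [/\ (M %| A1 * t ^+ 2 + d2 * u2 ^+ 2 - d3 * u3 ^+ 2)%Z,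
      (M %| A2 * t ^+ 2 + d3 * u3 ^+ 2 - d1 * u1 ^+ 2)%Z &
      (M %| A3 * t ^+ 2 + d1 * u1 ^+ 2 - d2 * u2 ^+ 2)%Z].

Lemma D_sol_mod_dvd [M N t u1 u2 u3 : int] :
  (N %| M)%Z -> D_sol_mod M t u1 u2 u3 -> D_sol_mod N t u1 u2 u3.
Proof. by move=> NM [h1 h2 h3]; split; apply: dvdz_trans NM _. Qed.

Lemma D_sol_mod_half [M t u1 u2 u3 : int] :
  D_sol_mod (4 * M) (2 * t) (2 * u1) (2 * u2) (2 * u3) -> D_sol_mod M t u1 u2 u3.
Proof.
have double (a b c x y z : int) :
    a * (2 * x) ^+ 2 + b * (2 * y) ^+ 2 - c * (2 * z) ^+ 2
    = 4 * (a * x ^+ 2 + b * y ^+ 2 - c * z ^+ 2) by ring.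
by rewrite /D_sol_mod !double !dvdz_mul2l.
Qed.

Lemma D_sol_mod4_even (t u1 u2 u3 : int) :
  ~~ (2 %| A1)%Z -> (2 %| A3)%Z ->
  (2 %| d1)%Z -> ~~ (4 %| d1)%Z -> ~~ (2 %| d2)%Z -> (2 %| d3)%Z -> ~~ (4 %| d3)%Z ->
  D_sol_mod 4 t u1 u2 u3 -> dvdz_all 2 t u1 u2 u3.
Proof.
move=> A1_odd A3_even d1_even d1_4 d2_odd d3_even d3_4 [h1 _ h3].
have dvd2_4 : (2 %| 4)%Z by [].
have u2_even : (2 %| u2)%Z.
  have even_part : (2 %| A3 * t ^+ 2 + d1 * u1 ^+ 2)%Z by rewrite rpredD ?dvdz_mulr.
  rewrite -(dvdz2_odd_mul_sqr _ u2 d2_odd) -(rpredBl _ even_part).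
  exact: dvdz_trans dvd2_4 h3.
have {}h1 : (4 %| A1 * t ^+ 2 - d3 * u3 ^+ 2)%Z.
  by move: h1; rewrite addrAC rpredDr // dvdz4_mul_sqr.
have t_even : (2 %| t)%Z.
  rewrite -(dvdz2_odd_mul_sqr _ t A1_odd) -(rpredBr _ (dvdz_mulr (u3 ^+ 2) d3_even)).
  exact: dvdz_trans dvd2_4 h1.
have u3_even : (2 %| u3)%Z.
  apply: (dvdz4_mul_sqr_double d3_even d3_4).
  by rewrite -(rpredBl _ (dvdz4_mul_sqr A1 t_even)).
have u1_even : (2 %| u1)%Z.
  apply: (dvdz4_mul_sqr_double d1_even d1_4).
  rewrite -(rpredDl _ (dvdz4_mul_sqr A3 t_even)).
  by rewrite -(rpredBr _ (dvdz4_mul_sqr d2 u2_even)).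
by split.
Qed.

Section Descent.

Hypothesis sol4_even :
  forall {t u1 u2 u3}, D_sol_mod 4 t u1 u2 u3 -> dvdz_all 2 t u1 u2 u3.

Lemma D_sol_mod_descent (k : nat) (t u1 u2 u3 : int) :
  D_sol_mod (4 ^+ k) t u1 u2 u3 -> dvdz_all (2 ^+ k) t u1 u2 u3.
Proof.
elim: k t u1 u2 u3 => [|k IHk] t u1 u2 u3; first by split; apply: dvd1z.
rewrite exprS => sol.
move: (sol); case: (sol4_even (D_sol_mod_dvd (dvdz_mulr _ (dvdzz 4)) sol)).
move=> /dvdzP[t' ->] /dvdzP[v1 ->] /dvdzP[v2 ->] /dvdzP[v3 ->].
rewrite ![_ * 2]mulrC => /D_sol_mod_half/IHk[? ? ? ?].
by split; rewrite exprS dvdz_mul2l.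
Qed.

End Descent.

End DescentModTwoPowers.

Lemma D_sol_mod_swap12 [A1 A2 A3 d1 d2 d3 M t u1 u2 u3 : int] :
  D_sol_mod A1 A2 A3 d1 d2 d3 M t u1 u2 u3 ->
  D_sol_mod (- A2) (- A1) (- A3) d2 d1 d3 M t u2 u1 u3.
Proof.
have dvdz_opp (m x y : int) : x = - y -> (m %| y)%Z -> (m %| x)%Z.
  by move=> ->; rewrite rpredN.
case=> h1 h2 h3; split;
  [apply: dvdz_opp h2 | apply: dvdz_opp h1 | apply: dvdz_opp h3]; ring.
Qed.

Lemma D_sol_mod_dvd_pow2 (A1 A2 A3 d1 d2 d3 : int) (k : nat) (t u1 u2 u3 : int) :
  ~~ (2 %| A1)%Z -> ~~ (2 %| A2)%Z -> (2 %| A3)%Z ->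
  ~~ (4 %| d1)%Z -> ~~ (4 %| d2)%Z -> (2 %| d3)%Z -> ~~ (4 %| d3)%Z ->
  (2 %| d1)%Z != (2 %| d2)%Z ->
  D_sol_mod A1 A2 A3 d1 d2 d3 (4 ^+ k) t u1 u2 u3 -> dvdz_all (2 ^+ k) t u1 u2 u3.
Proof.
move=> A1_odd A2_odd A3_even d1_4 d2_4 d3_even d3_4.
case d1_even: (2 %| d1)%Z; case d2_even: (2 %| d2)%Z => // _ sol.
  apply: D_sol_mod_descent sol => t' v1 v2 v3.
  by apply: D_sol_mod4_even; rewrite ?d2_even.
have [? ? ? ?] : dvdz_all (2 ^+ k) t u2 u1 u3.
  apply: D_sol_mod_descent (D_sol_mod_swap12 sol) => t' v1 v2 v3.
  by apply: D_sol_mod4_even; rewrite ?rpredN ?d1_even.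
by split.
Qed.

Lemma is_Z2_dvd_sub (a : nat -> int) (k m : nat) :
  is_Z2 a -> (k <= m)%N -> (2 ^+ k %| a m - a k)%Z.
Proof.
move=> a_Z2; elim: m => [|m IHm]; first by rewrite leqn0 => /eqP->; rewrite subrr.
rewrite leq_eqVlt ltnS => /predU1P[->|k_le_m]; first by rewrite subrr.
have step : (2 ^+ m %| a m.+1 - a m)%Z.
  by move/eqP: (a_Z2 m); rewrite eqz_mod_dvd -natz natrX.
rewrite -(subrKA (a m)) rpredD ?IHm //.
exact: dvdz_trans (dvdz_exp2l 2 k_le_m) step.
Qed.

Lemma is_Z2_eq0 (a : nat -> int) :
  is_Z2 a -> (forall k, (2 ^+ k %| a k.*2)%Z) -> ~ Z2_nonzero a.
Proof.
move=> a_Z2 dvd_a [k]; apply; apply/eqP; rewrite eqz_mod_dvd subr0 -natz natrX.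
by rewrite -(rpredBl _ (dvd_a k)) is_Z2_dvd_sub // -addnn leq_addr.
Qed.

Theorem lemma3p1 (e1 e2 e3 : int) (n : nat) (d1 d2 d3 : int) :
  e1 != 0 -> e2 != 0 -> e3 != 0 ->
  e1 + e2 + e3 = 0 ->
  ~~ (2 %| e1)%Z -> ~~ (2 %| e2)%Z ->
  (2 %| e3)%Z -> ~~ (4 %| e3)%Z ->
  odd n -> (0 < n)%N -> sqfree_nat n ->
  sqfree_int d1 -> sqfree_int d2 -> sqfree_int d3 ->
  (d1 %| 2 * e1 * e2 * e3 * n%:Z)%Z ->
  (d2 %| 2 * e1 * e2 * e3 * n%:Z)%Z ->
  (d3 %| 2 * e1 * e2 * e3 * n%:Z)%Z ->
  (exists s : int, d1 * d2 * d3 = s ^+ 2) ->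
  D_has_Q2_point e1 e2 e3 d1 d2 d3 n%:Z ->
  ~~ (2 %| d3)%Z.
Proof.
move=> _ _ _ _ e1_odd e2_odd e3_even _ n_odd _ _ sf1 sf2 sf3 _ _ _ [s sq]
  [t [u1 [u2 [u3 [[t_Z2 u1_Z2 u2_Z2 u3_Z2] [nz sol]]]]]].
apply/negP => d3_even.
have not_dvd4 d : sqfree_int d -> ~~ (4 %| d)%Z by case=> _ /(_ 2 isT).
have nZ_odd : ~~ (2 %| n%:Z)%Z by rewrite dvdzE dvdn2 n_odd.
have sol_mod k : D_sol_mod (e1 * n) (e2 * n) (e3 * n) d1 d2 d3 (4 ^+ k)
                   (t k.*2) (u1 k.*2) (u2 k.*2) (u3 k.*2).
  have -> : 4 ^+ k = (2 ^ k.*2)%N%:Z by rewrite -natz natrX -mul2n exprM.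
  case: (sol k.*2) => h1 h2 h3.
  by split; apply/dvdz_mod0P; rewrite ?h1 ?h2 ?h3 mod0z.
have dvd_all k : dvdz_all (2 ^+ k) (t k.*2) (u1 k.*2) (u2 k.*2) (u3 k.*2).
  apply: D_sol_mod_dvd_pow2 (sol_mod k); rewrite ?not_dvd4 ?dvdz2_mul ?negb_or //.
  - by rewrite e1_odd nZ_odd.
  - by rewrite e2_odd nZ_odd.
  - by rewrite e3_even.
  - exact: sqfree_prod_sqr_dvd sq d3_even.
by case: nz => [|[|[|]]]; apply: is_Z2_eq0 => // k; case: (dvd_all k).
Qed.
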